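(* Let $(X,d)$ be a hemi-metric space and $(E,\delta)$ a metric space. Let $T=(T_{ab})_{(a,b)\in E\times E}$ and $T'=(T'_{ab})_{(a,b)\in E\times E}$ be two families of self-maps of $X$ that are nonexpansive with respect to $d$. Suppose there exist $\epsilon\ge 0$ and $L>0$ such that for all $(a,b),(a',b')\in E\times E$ and all $x\in X$, \[ d^{\circ}(T_{ab}(x),T'_{a'b'}(x))\le L(\delta(a,a')+\delta(b,b'))+\epsilon. \] Then for all nonempty compact subsets $\mathcal{A},\mathcal{A}',\mathcal{B},\mathcal{B}'\subset E$, \[ |\rho(T,\mathcal{A},\mathcal{B})-\rho(T',\mathcal{A}',\mathcal{B}')|\le L\big(\delta_H(\mathcal{A},\mathcal{A}')+\delta_H(\mathcal{B},\mathcal{B}')\big)+\epsilon. \]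
   Context: A hemi-metric on a set $X$ is a map $d:X\times X\to\mathbb{R}$ satisfying $d(x,z)\le d(x,y)+d(y,z)$ for all $x,y,z$, and $d(x,y)=d(y,x)=0$ iff $x=y$ (it may take negative values). Its symmetrization $d^{\circ}(x,y)=\max(d(x,y),d(y,x))$ is a metric, and $X$ carries the topology of $d^{\circ}$. A map $T:X\to X$ is nonexpansive if $d(T(x),T(y))\le d(x,y)$ for all $x,y$. $\delta_H$ denotes the Hausdorff distance between compact subsets of $E$ induced by $\delta$. Escape rate game and its value: given nonempty compact action sets $\mathcal{A},\mathcal{B}$, a family of nonexpansive self-maps $T_{ab}$ of $X$, $(a,b)\in\mathcal{A}\times\mathcal{B}$, and an initial state $x_0\in X$, two players play infinitely many turns with perfect information: at turn $k\ge1$, player Min chooses $a_k\in\mathcal{A}$, then, having observed $a_k$, player Max chooses $b_k\in\mathcal{B}$, and the state becomes $x_k=T_{a_kb_k}(x_{k-1})$. A strategy of a player is a map assigning an action to each finite history of states and actions. For strategies $\sigma$ of Min and $\tau$ of Max, the payoff is the escape rate $J(\sigma,\tau)=\limsup_{k\to\infty}\frac1k d(x_k,x_0)$ (independent of $x_0$), which Min minimizes and Max maximizes. The game has value $\lambda\in\mathbb{R}$ if for every $\epsilon'>0$ there are strategies $\sigma^*,\tau^*$ with $J(\sigma^*,\tau)\le\lambda+\epsilon'$ and $J(\sigma,\tau^* )\ge\lambda-\epsilon'$ for all strategies $\sigma,\tau$. The value (competitive spectral radius) is denoted $\rho(T,\mathcal{A},\mathcal{B})$. Standing assumption (under which the value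 exists): for every $x\in X$ the maps $a\mapsto T_{ab}(x)$ and $b\mapsto T_{ab}(x)$ are continuous, and for every compact $K\subset X$ the set $\{T_{ab}(x):(a,b,x)\in\mathcal{A}\times\mathcal{B}\times K\}$ is compact; this is assumed for both families $T,T'$ and all the action sets considered. *)

From Stdlib Require List.
From HB Require Import structures.
From mathcomp Require Import all_boot all_order all_algebra.
From mathcomp Require Import all_classical all_reals all_analysis.
Set Implicit Arguments. Unset Strict Implicit. Unset Printing Implicit Defensive.
Import Order.TTheory GRing.Theory Num.Theory.
Local Open Scope classical_set_scope.
Local Open Scope ring_scope.

Section Defs.
Variable R : realType.

Definition hemi_metric (X : Type) (d : X -> X -> R) : Prop :=
  (forall x y z, d x z <= d x y + d y z) /\
  (forall x y, (d x y = 0 /\ d y x = 0) <-> x = y).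

Definition metric (E : Type) (dl : E -> E -> R) : Prop :=
  (forall a b, dl a b = 0 <-> a = b) /\
  (forall a b, dl a b = dl b a) /\
  (forall a b c, dl a c <= dl a b + dl b c).

Definition dsym (X : Type) (d : X -> X -> R) (x y : X) : R := Num.max (d x y) (d y x).

Definition mopen (X : Type) (m : X -> X -> R) (U : set X) : Prop :=
  forall x, U x -> exists2 r : R, 0 < r & forall y, m x y < r -> U y.

Definition mcompact (X : Type) (m : X -> X -> R) (K : set X) : Prop :=
  forall (I : Type) (U : I -> set X),
    (forall i, mopen m (U i)) -> K `<=` \bigcup_i U i ->
    exists s : seq I, K `<=` \bigcup_(i in [set i | List.In i s]) U i.

Definition nonexpansive (X : Type) (d : X -> X -> R) (f : X -> X) : Prop :=
  forall x y, d (f x) (f y) <= d x y.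

Definition hausdorff (E : Type) (dl : E -> E -> R) (A B : set E) : R :=
  Num.max (sup [set inf [set dl a b | b in B] | a in A])
          (sup [set inf [set dl a b | a in A] | b in B]).

Definition standing (X E : Type) (d : X -> X -> R) (dl : E -> E -> R)
  (T : E -> E -> X -> X) (A B : set E) : Prop :=
  (forall b x, B b -> forall a, A a -> forall e : R, 0 < e ->
     exists2 eta : R, 0 < eta & forall a', A a' -> dl a a' < eta ->
       dsym d (T a b x) (T a' b x) < e) /\
  (forall a x, A a -> forall b, B b -> forall e : R, 0 < e ->
     exists2 eta : R, 0 < eta & forall b', B b' -> dl b b' < eta ->
       dsym d (T a b x) (T a b' x) < e) /\
  (forall K : set X, mcompact (dsym d) K ->
     mcompact (dsym d) [set y | exists a b x, [/\ A a, B b, K x & y = T a b x]] ).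

(* Histories: initial state x0 together with the list of past turns
   (a_i, b_i, x_i).  Min strategy: history -> action;
   Max strategy: history -> Min's current action -> action. *)
Definition history (X E : Type) := seq (E * E * X)%type.

Definition min_strategy (X E : Type) (A : set E)
  (sigma : X -> history X E -> E) : Prop := forall x0 h, A (sigma x0 h).

Definition max_strategy (X E : Type) (B : set E)
  (tau : X -> history X E -> E -> E) : Prop := forall x0 h a, B (tau x0 h a).

Fixpoint play (X E : Type) (T : E -> E -> X -> X) (x0 : X)
  (sigma : X -> history X E -> E) (tau : X -> history X E -> E -> E) (k : nat)
  : history X E * X :=
  match k with
  | O => ([::], x0)
  | S k' => let: (h, x) := play T x0 sigma tau k' in
            let a := sigma x0 h in
            let b := tau x0 h a in
            let x' := T a b x in
            (rcons h (a, b, x'), x')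
  end.

Definition payoff (X E : Type) (d : X -> X -> R) (T : E -> E -> X -> X) (x0 : X)
  sigma tau : \bar R :=
  limn_esup (fun k : nat => ((d (play T x0 sigma tau k).2 x0) / k%:R)%:E).

Definition game_value (X E : Type) (d : X -> X -> R) (T : E -> E -> X -> X)
  (A B : set E) (x0 : X) (lam : R) : Prop :=
  forall e : R, 0 < e ->
    exists sigma, exists tau,
      min_strategy A sigma /\ max_strategy B tau /\
      (forall tau', max_strategy B tau' ->
         (payoff d T x0 sigma tau' <= (lam + e)%:E)%E) /\
      (forall sigma', min_strategy A sigma' ->
         ((lam - e)%:E <= payoff d T x0 sigma' tau)%E).

End Defs.

From HB Require Import structures.
From mathcomp Require Import all_boot all_order all_algebra.
From mathcomp Require Import all_classical all_reals all_analysis.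
From mathcomp Require Import ring lra.
Import Order.TTheory GRing.Theory Num.Theory.
Local Open Scope classical_set_scope.
Local Open Scope ring_scope.

(* Fix near-optimal strategies tau of Max in the game (T, A, B) and sigma' of Min
   in the game (T', A', B'), and maps pA : A' -> A, pB : B -> B' moving points by
   at most the Hausdorff distances (up to eta).  Each player can shadow the other
   game: Min plays in (T, A, B) the pA-image of what sigma' does in a fictitious
   play of (T', A', B') where Max answers with the pB-images of the real Max
   moves; Max does the symmetric thing in (T', A', B').  The two resulting plays
   then use, turn by turn, actions (pA a', b) and (a', pB b), so by nonexpansiveness
   their states drift apart by at most L (dH(A, A') + dH(B, B') + 2 eta) + eps per
   turn, and the escape rates differ by at most that much. *)

Lemma limn_esup_le_shift (R : realType) (u v : nat -> R) (C : R) :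
  (forall n, u n <= v n + C) ->
  (limn_esup (fun n => (u n)%:E) <= limn_esup (fun n => (v n)%:E) + C%:E)%E.
Proof.
move=> uv; rewrite !limn_esup_lim.
have cvgC : cvgn (cst C%:E : nat -> \bar R) by apply: is_cvg_cst.
have limC : limn (cst C%:E : nat -> \bar R) = C%:E by apply: lim_cst.
have Cdef : (limn (esups (fun n => (v n)%:E)) +? limn (cst C%:E : nat -> \bar R))%E.
  by rewrite limC fin_num_adde_defl.
rewrite -limC -limeD //; last exact: is_cvg_esups.
apply: lee_lim; [exact: is_cvg_esups|by apply: is_cvgeD => //; exact: is_cvg_esups|].
apply: nearW => n; apply: ge_ereal_sup => _ [m /= nm <-].
apply: (@le_trans _ _ (v m + C)%:E); first by rewrite lee_fin.
by rewrite EFinD leeD2r //; apply: ereal_sup_ubound; exists m.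
Qed.

Lemma In_le_foldr_max (R : realDomainType) (s : seq R) r :
  List.In r s -> r <= foldr Num.max 0 s.
Proof. by elim: s => //= x s IHs [->|/IHs]; rewrite le_max ?lexx // => ->; rewrite orbT. Qed.

Section MetricSpace.
Context {R : realType} {E : Type} {dl : E -> E -> R}.
Hypothesis dl_metric : metric dl.

Let dlC a b : dl a b = dl b a. Proof. by case: dl_metric => _ []. Qed.

Lemma metric_ge0 a b : 0 <= dl a b.
Proof.
case: dl_metric => dl0 [_ dl_tri]; have := dl_tri a b a.
by rewrite (proj2 (dl0 a a) erefl) (dlC b a); lra.
Qed.

Lemma mcompact_bounded {K} z : mcompact dl K -> exists M, forall y, K y -> dl z y <= M.
Proof.
case: dl_metric => _ [_ dl_tri] cK.
have [||s Ks] := cK R (fun r => [set y | dl z y < r]).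
- move=> r x /= zx; exists (r - dl z x); first by rewrite subr_gt0.
  by move=> y xy /=; have := dl_tri z x y; lra.
- by move=> y _; exists (dl z y + 1) => //=; lra.
exists (foldr Num.max 0 s) => y /Ks [r /= /In_le_foldr_max]; lra.
Qed.

Lemma hausdorffC A B : hausdorff dl A B = hausdorff dl B A.
Proof.
rewrite [in LHS](_ : dl = fun a b => dl b a); last by apply/funext => a; apply/funext.
by rewrite /hausdorff maxC.
Qed.

Lemma hausdorff_approx {A B a eta} : mcompact dl A -> B !=set0 -> A a -> 0 < eta ->
  exists2 b, B b & dl a b <= hausdorff dl A B + eta.
Proof.
move=> cA [b0 Bb0] Aa eta_gt0.
have lbB a' : has_lbound [set dl a' b | b in B].
  by exists 0 => _ [b _ <-]; exact: metric_ge0.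
have [M dl_le_M] := mcompact_bounded b0 cA.
have ubA : has_ubound [set inf [set dl a' b | b in B] | a' in A].
  exists M => _ [a' Aa' <-]; apply: le_trans (dl_le_M a' Aa').
  by rewrite (dlC b0); apply: (ge_inf (lbB a')); exists b0.
have infB : has_inf [set dl a b | b in B] by split; [exists (dl a b0), b0|exact: lbB].
have [_ [b Bb <-] ab_lt] := inf_adherent eta_gt0 infB.
exists b => //.
have : inf [set dl a b | b in B] <= hausdorff dl A B.
  by rewrite /hausdorff le_max (ub_le_sup ubA) //; exists a.
lra.
Qed.

Lemma hausdorff_selection {A B eta} : mcompact dl A -> B !=set0 -> 0 < eta ->
  exists p : E -> E, forall a, A a -> B (p a) /\ dl a (p a) <= hausdorff dl A B + eta.
Proof.
move=> cA [b0 Bb0] eta_gt0.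
suff /choice[p p_near] : forall a, exists b, A a -> B b /\ dl a b <= hausdorff dl A B + eta.
  by exists p.
move=> a.
have [Aa|nAa] := pselect (A a); last by exists b0 => /nAa.
by have [b Bb ab] := hausdorff_approx cA (ex_intro _ b0 Bb0) Aa eta_gt0; exists b.
Qed.

Lemma hausdorff_selection_sym {A B eta} : mcompact dl B -> A !=set0 -> 0 < eta ->
  exists p : E -> E, forall b, B b -> A (p b) /\ dl (p b) b <= hausdorff dl A B + eta.
Proof.
move=> cB A0 eta_gt0; have [p p_near] := hausdorff_selection cB A0 eta_gt0.
by exists p; rewrite hausdorffC => b /p_near; rewrite dlC.
Qed.

End MetricSpace.

Section HemiMetric.
Context {R : realType} {X : Type} {d : X -> X -> R}.

Lemma dsymC x y : dsym d x y = dsym d y x.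
Proof. by rewrite /dsym maxC. Qed.

Lemma dsym_nonexpansive {f} :
  nonexpansive d f -> forall x y, dsym d (f x) (f y) <= dsym d x y.
Proof. by move=> f_ne x y; rewrite /dsym ge_max !le_max !f_ne ?orbT. Qed.

Hypothesis d_hemi : hemi_metric d.

Lemma dsymxx x : dsym d x x = 0.
Proof. by case: d_hemi => _ /(_ x x) [_ /(_ erefl) [dxx _]]; rewrite /dsym dxx maxxx. Qed.

Lemma dsym_triangle x y z : dsym d x z <= dsym d x y + dsym d y z.
Proof.
case: d_hemi => d_tri _; rewrite /dsym ge_max.
apply/andP; split; [apply: le_trans (d_tri x y z) _|apply: le_trans (d_tri z y x) _].
  by apply: lerD; rewrite le_max lexx.
by rewrite addrC; apply: lerD; rewrite le_max lexx orbT.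
Qed.

Lemma dsym_ge0 x y : 0 <= dsym d x y.
Proof. by have := dsym_triangle x y x; rewrite dsymxx (dsymC y x); lra. Qed.

End HemiMetric.

Section Plays.
Context {X E : Type}.
Variables (T : E -> E -> X -> X) (x0 : X).
Variables (sigma : X -> history X E -> E) (tau : X -> history X E -> E -> E).

Definition actions (k : nat) : E * E :=
  let h := (play T x0 sigma tau k).1 in (sigma x0 h, tau x0 h (sigma x0 h)).

Definition last_state (y0 : X) (h : history X E) : X := last y0 [seq p.2 | p <- h].

Lemma play_stateS k : (play T x0 sigma tau k.+1).2 =
  T (actions k).1 (actions k).2 (play T x0 sigma tau k).2.
Proof. by rewrite /actions /=; case: (play T x0 sigma tau k). Qed.

Lemma play_historyS k : (play T x0 sigma tau k.+1).1 =
  rcons (play T x0 sigma tau k).1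
    ((actions k).1, (actions k).2, (play T x0 sigma tau k.+1).2).
Proof. by rewrite /actions /=; case: (play T x0 sigma tau k). Qed.

Lemma play_state_last k :
  (play T x0 sigma tau k).2 = last_state x0 (play T x0 sigma tau k).1.
Proof. by case: k => // k; rewrite play_historyS /last_state map_rcons last_rcons. Qed.

End Plays.

Section CoupledPlays.
Context {R : realType} {X E : Type} {d : X -> X -> R}.
Context {T T' : E -> E -> X -> X} {x0 : X}.
Context {sigma sigma' : X -> history X E -> E} {tau tau' : X -> history X E -> E -> E}.
Hypotheses (d_hemi : hemi_metric d) (T_ne : forall a b, nonexpansive d (T a b)).
Context {C : R}.
Hypothesis actions_close : forall k x,
  dsym d (T (actions T x0 sigma tau k).1 (actions T x0 sigma tau k).2 x)
         (T' (actions T' x0 sigma' tau' k).1 (actions T' x0 sigma' tau' k).2 x) <= C.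

Let x k := (play T x0 sigma tau k).2.
Let x' k := (play T' x0 sigma' tau' k).2.

Lemma dsym_play_le k : dsym d (x k) (x' k) <= k%:R * C.
Proof.
elim: k => [|k IHk]; first by rewrite mul0r /x /x' dsymxx.
rewrite /x /x' !play_stateS -/(x k) -/(x' k).
set a := actions T x0 sigma tau k; set a' := actions T' x0 sigma' tau' k.
apply: le_trans (dsym_triangle d_hemi _ (T a.1 a.2 (x' k)) _) _.
have := dsym_nonexpansive (T_ne a.1 a.2) (x k) (x' k).
have := actions_close k (x' k); rewrite -natr1 mulrDl mul1r; lra.
Qed.

Lemma payoff_le_shift :
  (payoff d T x0 sigma tau <= payoff d T' x0 sigma' tau' + C%:E)%E.
Proof.
have C_ge0 : 0 <= C := le_trans (dsym_ge0 d_hemi _ _) (actions_close 0 x0).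
(* at k = 0 both escape ratios are 0 / 0 = 0, whence the need for 0 <= C *)
apply: limn_esup_le_shift => -[|k]; first by rewrite invr0 !mulr0 add0r.
have k_gt0 : 0 < k.+1%:R :> R by rewrite ltr0n.
rewrite -[C](mulfK (lt0r_neq0 k_gt0)) -mulrDl ler_pM2r ?invr_gt0 //.
case: d_hemi => d_tri _; apply: le_trans (d_tri _ (x' k.+1) _) _.
rewrite addrC mulrC lerD2l; apply: le_trans (dsym_play_le k.+1).
by rewrite /dsym le_max lexx.
Qed.

End CoupledPlays.

Section Shadowing.
Context {X E : Type}.
Variables (T T' : E -> E -> X -> X) (pA pB : E -> E).
Variables (sigma' : X -> history X E -> E) (tau : X -> history X E -> E -> E).

Definition replay (U : E -> E -> X -> X) (y0 : X)
    (move : history X E -> E * E -> E * E) : history X E -> history X E :=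
  foldl (fun h p => let ab := move h p.1 in
                    rcons h (ab.1, ab.2, U ab.1 ab.2 (last_state y0 h))) [::].

Lemma replay_rcons U y0 move h p : replay U y0 move (rcons h p) =
  let h' := replay U y0 move h in let ab := move h' p.1 in
  rcons h' (ab.1, ab.2, U ab.1 ab.2 (last_state y0 h')).
Proof. by rewrite /replay foldl_rcons. Qed.

Definition shadow_min_move y0 h' (ab : E * E) := (sigma' y0 h', pB ab.2).
Definition shadow_max_move y0 h (ab : E * E) := (pA ab.1, tau y0 h (pA ab.1)).

Definition shadow_min y0 h := pA (sigma' y0 (replay T' y0 (shadow_min_move y0) h)).
Definition shadow_max y0 h' a' :=
  pB (tau y0 (replay T y0 (shadow_max_move y0) h') (pA a')).

Variable x0 : X.

Let H k := (play T x0 shadow_min tau k).1.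
Let H' k := (play T' x0 sigma' shadow_max k).1.

Lemma shadow_actions_of_replay k :
    replay T' x0 (shadow_min_move x0) (H k) = H' k ->
    replay T x0 (shadow_max_move x0) (H' k) = H k ->
  (actions T x0 shadow_min tau k).1 = pA (actions T' x0 sigma' shadow_max k).1 /\
  (actions T' x0 sigma' shadow_max k).2 = pB (actions T x0 shadow_min tau k).2.
Proof. by rewrite /actions /shadow_max /shadow_min -/(H k) -/(H' k) => -> ->. Qed.

Lemma replay_play k :
  replay T' x0 (shadow_min_move x0) (H k) = H' k /\
  replay T x0 (shadow_max_move x0) (H' k) = H k.
Proof.
elim: k => [//|k [IH IH']].
move: (shadow_actions_of_replay k IH IH').
rewrite /H /H' !play_historyS !replay_rcons !play_stateS !play_state_last /actions.
by rewrite -/(H k) -/(H' k) IH IH' /= => -[<- <-].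
Qed.

Lemma shadow_actions k :
  (actions T x0 shadow_min tau k).1 = pA (actions T' x0 sigma' shadow_max k).1 /\
  (actions T' x0 sigma' shadow_max k).2 = pB (actions T x0 shadow_min tau k).2.
Proof. by have [] := replay_play k; exact: shadow_actions_of_replay. Qed.

End Shadowing.

Section GameValues.
Context {R : realType} {X E : Type} {d : X -> X -> R}.
Context {T T' : E -> E -> X -> X} {A B A' B' : set E} {x0 : X} {rho rho' : R}.
Hypotheses (d_hemi : hemi_metric d) (T_ne : forall a b, nonexpansive d (T a b)).
Hypotheses (value : game_value d T A B x0 rho) (value' : game_value d T' A' B' x0 rho').

Lemma game_value_sub_le_shadow (pA pB : E -> E) (C : R) :
  (forall a', A' a' -> A (pA a')) -> (forall b, B b -> B' (pB b)) ->
  (forall a' b x, A' a' -> B b -> dsym d (T (pA a') b x) (T' a' (pB b) x) <= C) ->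
  rho - rho' <= C.
Proof.
move=> pA_A pB_B' close; apply/ler_addgt0Pr => e e_gt0.
have e2_gt0 : 0 < e / 2 by rewrite divr_gt0.
have [_ [tau [_ [tauB [_ tau_opt]]]]] := value _ e2_gt0.
have [sigma' [_ [sigma'A [_ [sigma'_opt _]]]]] := value' _ e2_gt0.
pose sigma := shadow_min T' pA pB sigma'.
pose tau' := shadow_max T pA pB tau.
have sigmaA : min_strategy A sigma by move=> y0 h; exact/pA_A/sigma'A.
have tau'B' : max_strategy B' tau' by move=> y0 h a; exact/pB_B'/tauB.
have step k y : dsym d (T (actions T x0 sigma tau k).1 (actions T x0 sigma tau k).2 y)
    (T' (actions T' x0 sigma' tau' k).1 (actions T' x0 sigma' tau' k).2 y) <= C.
  have [-> ->] := shadow_actions T T' pA pB sigma' tau x0 k.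
  by apply: close; [exact: sigma'A|exact: tauB].
have := payoff_le_shift d_hemi T_ne step.
have := tau_opt sigma sigmaA; have := sigma'_opt tau' tau'B'.
move=> /(leeD2r C%:E) le' le /(le_trans le) /le_trans /(_ le').
by rewrite -EFinD lee_fin; lra.
Qed.

Lemma game_value_sub_le_hausdorff {dl : E -> E -> R} {L eps : R} :
  metric dl -> 0 < L ->
  (forall a b a' b' x, dsym d (T a b x) (T' a' b' x) <= L * (dl a a' + dl b b') + eps) ->
  A !=set0 -> B' !=set0 -> mcompact dl A' -> mcompact dl B ->
  rho - rho' <= L * (hausdorff dl A A' + hausdorff dl B B') + eps.
Proof.
move=> dl_metric L_gt0 T_lip A0 B'0 cA' cB; apply/ler_addgt0Pr => e e_gt0.
have eta_gt0 : 0 < e / (2 * L) by rewrite divr_gt0 // mulr_gt0.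
have [pA pA_near] := hausdorff_selection_sym dl_metric cA' A0 eta_gt0.
have [pB pB_near] := hausdorff_selection dl_metric cB B'0 eta_gt0.
apply: (game_value_sub_le_shadow pA pB).
- by move=> a' /pA_near[].
- by move=> b /pB_near[].
move=> a' b x /pA_near[_ near_a] /pB_near[_ near_b].
apply: le_trans (T_lip _ _ _ _ x) _.
have -> : L * (hausdorff dl A A' + hausdorff dl B B') + eps + e =
  L * (hausdorff dl A A' + e / (2 * L) + (hausdorff dl B B' + e / (2 * L))) + eps.
  by field; rewrite lt0r_neq0.
by rewrite lerD2r; apply: ler_wpM2l; [exact: ltW|exact: lerD].
Qed.

End GameValues.

Theorem theorem3 (R : realType) (X E : Type) (d : X -> X -> R) (dl : E -> E -> R)
  (T T' : E -> E -> X -> X) (eps L : R) :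
  hemi_metric d -> metric dl ->
  (forall a b, nonexpansive d (T a b)) ->
  (forall a b, nonexpansive d (T' a b)) ->
  0 <= eps -> 0 < L ->
  (forall a b a' b' x,
     dsym d (T a b x) (T' a' b' x) <= L * (dl a a' + dl b b') + eps) ->
  forall (A A' B B' : set E),
    A !=set0 -> A' !=set0 -> B !=set0 -> B' !=set0 ->
    mcompact dl A -> mcompact dl A' -> mcompact dl B -> mcompact dl B' ->
    standing d dl T A B -> standing d dl T' A' B' ->
  forall (x0 : X) (rho rho' : R),
    game_value d T A B x0 rho -> game_value d T' A' B' x0 rho' ->
    `|rho - rho'| <= L * (hausdorff dl A A' + hausdorff dl B B') + eps.
Proof.
(* 0 <= eps and the standing assumptions only serve the existence of the values. *)
move=> d_hemi dl_metric T_ne T'_ne _ L_gt0 T_lip A A' B B' A0 A'0 B0 B'0 cA cA' cB cB' _ _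
  x0 rho rho' value value'.
have T'_lip a' b' a b x :
    dsym d (T' a' b' x) (T a b x) <= L * (dl a' a + dl b' b) + eps.
  by case: dl_metric => _ [dlC _]; rewrite dsymC (dlC a') (dlC b').
rewrite ler_norml lerNl opprB; apply/andP; split.
  rewrite (hausdorffC dl_metric A) (hausdorffC dl_metric B).
  exact: (game_value_sub_le_hausdorff d_hemi T'_ne value' value dl_metric L_gt0 T'_lip
           A'0 B0 cA cB').
exact: (game_value_sub_le_hausdorff d_hemi T_ne value value' dl_metric L_gt0 T_lip
         A0 B'0 cA' cB).
Qed.
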